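(* Let $n\ge3$, $k\ge1$ be integers, $\alpha=n/2-1$, and let $b>0>c$ be real numbers satisfying $$bc=-\frac{(k+1)k(\alpha+k-1)}{(2\alpha+k)(2\alpha+k-1)(\alpha+k+1)},\qquad b+c=-\frac{2\alpha(k+1)^2(\alpha+k-1)}{(2\alpha+k)(2\alpha+k-1)(\alpha+2k+1)}.$$ Then $$q_{k+1}(t):=P_{k+1}^{(n)}(t)+bP_{k-1}^{(n)}(t)=\frac{(\alpha)_{k+1}2^{k+1}}{(2\alpha)_{k+1}}(t-\beta_1)\cdots(t-\beta_{k+1}),$$ where $\beta_1,\dots,\beta_{k+1}$ are distinct, lie in $(-1,1)$, and the set $\{\beta_1,\dots,\beta_{k+1}\}$ is symmetric about the origin.
   Context: $P_i^{(n)}$ is the Gegenbauer polynomial of degree $i$, i.e. the Jacobi polynomial with parameters $(n-3)/2,(n-3)/2$ normalized so that $P_i^{(n)}(1)=1$ ($P_0^{(n)}=1$). $(x)_m=x(x+1)\cdots(x+m-1)$ is the Pochhammer symbol. *)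

From HB Require Import structures.
From mathcomp Require Import all_boot all_order all_algebra.
From mathcomp Require Import reals.
Set Implicit Arguments. Unset Strict Implicit. Unset Printing Implicit Defensive.
Import Order.TTheory GRing.Theory Num.Theory.
Local Open Scope ring_scope.

Section Gegen.
Variable R : realType.

(* gegen_pair n i = (P_i^{(n)}, P_{i+1}^{(n)}), computed with the standard
   three-term recurrence of the Gegenbauer polynomials normalized by P(1) = 1:
     P_0 = 1, P_1 = t,
     (i + n - 2) P_{i+1} = (2 i + n - 2) t P_i - i P_{i-1}. *)
Fixpoint gegen_pair (n i : nat) : {poly R} * {poly R} :=
  match i with
  | 0 => (1, 'X)
  | i'.+1 =>
      let pq := gegen_pair n i' in
      (pq.2,
       ((i' + n - 1)%:R)^-1 *:
         ((2 * i' + n)%:R *: ('X * pq.2) - (i'.+1)%:R *: pq.1))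
  end.

Definition gegen (n i : nat) : {poly R} := (gegen_pair n i).1.

Definition poch (x : R) (m : nat) : R := \prod_(i < m) (x + i%:R).

End Gegen.

(* At a zero of P_k the three-term recurrence gives
   q_{k+1} = -(k/(2 alpha + k) - b) P_{k-1}.  The two conditions say that b and c
   are the roots of a quadratic which is positive at u = k/(2 alpha + k) > 0 > c,
   so b < u.  Hence, exactly as in the classical interlacing proof that P_k has k
   simple zeros in (-1, 1), q_{k+1} alternates in sign at -1, the zeros of P_k and
   1, and the intermediate value theorem gives its k + 1 zeros.  Its leading
   coefficient is that of P_{k+1}, and q_{k+1} is even or odd, so the zero set is
   symmetric. *)

From HB Require Import structures.
From mathcomp Require Import all_boot all_order all_algebra.
From mathcomp Require Import reals polyrcf.
From mathcomp Require Import ring lra zify.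
Import Order.TTheory GRing.Theory Num.Theory.
Set Implicit Arguments. Unset Strict Implicit. Unset Printing Implicit Defensive.
Local Open Scope ring_scope.

Lemma nat_ind2 (P : nat -> Prop) :
  P 0%N -> P 1%N -> (forall i, P i -> P i.+1 -> P i.+2) -> forall i, P i.
Proof.
move=> P0 P1 PSS i; suff [] : P i /\ P i.+1 by [].
by elim: i => [|i [IHi IHSi]]; split => //; apply: PSS.
Qed.

Lemma roots_closed_oppr (F : idomainType) (p : {poly F}) (s : seq F) :
  p = lead_coef p *: \prod_(x <- s) ('X - x%:P) -> p != 0 ->
  (forall x, root p (- x) = root p x) -> all (fun x => - x \in s) s.
Proof.
move=> p_eq p_neq0 p_sym; rewrite -lead_coef_eq0 in p_neq0.
have root_p x : root p x = (x \in s) by rewrite {1}p_eq rootZ // root_prod_XsubC.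
by apply/allP => x; rewrite -!root_p p_sym.
Qed.

Lemma prod_subr_sign (R : realDomainType) (r : nat -> R) (y : R) (m i : nat) :
  (m <= i)%N ->
  (forall j, (j < m)%N -> r j < y) ->
  (forall j, (m <= j < i)%N -> y < r j) ->
  0 < (-1) ^+ (i - m) * \prod_(j < i) (y - r j).
Proof.
move=> le_mi lt_y gt_y.
rewrite -(big_mkord xpredT (fun j => y - r j)) (big_cat_nat (leq0n m) le_mi) /= mulrCA.
rewrite -prodr_const_nat -big_split /=.
apply: mulr_gt0; rewrite big_seq; apply: prodr_gt0 => j; rewrite mem_index_iota.
  by move=> /andP[_ /lt_y]; rewrite subr_gt0.
by move=> /gt_y; rewrite mulN1r opprB subr_gt0.
Qed.

Lemma roots_between_alternating_signs (R : rcfType) (p : {poly R})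
    (t : nat -> R) (K : nat) :
  (forall m, (m < K)%N -> t m < t m.+1) ->
  (forall m, (m <= K)%N -> 0 < (-1) ^+ (K - m) * p.[t m]) ->
  exists r : nat -> R, forall m, (m < K)%N -> t m < r m < t m.+1 /\ root p (r m).
Proof.
move=> t_incr p_alt.
(* The guard [m < K] makes the predicate satisfiable for every [m], so that
   [xchoose] picks all the roots at once. *)
have root_between m : exists y, (m < K)%N ==> (t m < y < t m.+1) && root p y.
  have [ltmK|] := ltnP m K; last by exists 0.
  have sign_change : p.[t m] * p.[t m.+1] < 0.
    have := mulr_gt0 (p_alt m (ltnW ltmK)) (p_alt m.+1 ltmK).
    have -> : (K - m = (K - m.+1).+1)%N by lia.
    have -> : (-1) ^+ (K - m.+1).+1 * p.[t m] * ((-1) ^+ (K - m.+1) * p.[t m.+1])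
        = - ((-1) ^+ (K - m.+1)) ^+ 2 * (p.[t m] * p.[t m.+1]) by rewrite exprS; ring.
    by rewrite sqrr_sign mulN1r oppr_gt0.
  have [y] := poly_ivtoo (ltW (t_incr m ltmK)) sign_change.
  by rewrite in_itv /= => t_y root_y; exists y; rewrite t_y.
exists (fun m => xchoose (root_between m)) => m ltmK.
by have /implyP/(_ ltmK)/andP[] := xchooseP (root_between m).
Qed.

Lemma vieta_root_lt (R : realFieldType) (a K b c : R) :
  1/2 <= a -> 1 <= K -> c < 0 ->
  b * c = - ((K + 1) * K * (a + K - 1) /
             ((2 * a + K) * (2 * a + K - 1) * (a + K + 1))) ->
  b + c = - (2 * a * (K + 1) ^+ 2 * (a + K - 1) /
             ((2 * a + K) * (2 * a + K - 1) * (a + 2 * K + 1))) ->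
  b < K / (2 * a + K).
Proof.
move=> a_ge K_ge c_lt0 bc_eq bpc_eq; set u := K / (2 * a + K).
pose F := K * (2 * a + K - 1) * (a + 2 * K + 1) * (a + K + 1)
    + 2 * a * (K + 1) ^+ 2 * (a + K - 1) * (a + K + 1)
    - (2 * a + K) * (K + 1) * (a + K - 1) * (a + 2 * K + 1).
pose D := (2 * a + K) ^+ 2 * (2 * a + K - 1) * (a + 2 * K + 1) * (a + K + 1).
have F_gt0 : 0 < F.
  (* As a polynomial in a - 1/2 and K - 1, F has nonnegative coefficients. *)
  have p_ge0 : 0 <= a - 1/2 by lra.
  have q_ge0 : 0 <= K - 1 by lra.
  have pq_ge0 := mulr_ge0 p_ge0 q_ge0.
  by have := mulr_ge0 pq_ge0 p_ge0; have := mulr_ge0 pq_ge0 q_ge0; rewrite /F; nra.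
have D_gt0 : 0 < D by rewrite /D !mulr_gt0 ?exprn_gt0 //; lra.
have vieta : (u - b) * (u - c) = K * F / D.
  rewrite (_ : (u - b) * (u - c) = u * u - u * (b + c) + b * c); last by ring.
  rewrite bc_eq bpc_eq /u /F /D; field.
  by rewrite !lt0r_neq0 //; lra.
have u_gt0 : 0 < u by apply: divr_gt0; lra.
have : 0 < (u - b) * (u - c) by rewrite vieta !mulr_gt0 ?invr_gt0 //; lra.
by rewrite pmulr_lgt0 ?subr_gt0; lra.
Qed.

Section AlternatingZeros.
Variable R : rcfType.
Implicit Types (P Q N : {poly R}) (r : nat -> R).

(* The invariant of the Sturm-type argument: P, of degree i, has its i zeros
   r 0 < ... < r i.-1 in (-1, 1), and Q alternates in sign on them, starting
   positive at the largest. *)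
Definition alternating_zeros P Q r (i : nat) : Prop :=
  [/\ forall j1 j2, (j1 < j2 < i)%N -> r j1 < r j2,
      forall j, (j < i)%N -> -1 < r j < 1,
      forall j, (j < i)%N -> root P (r j),
      size P = i.+1 /\ 0 < lead_coef P &
      forall j, (j < i)%N -> 0 < (-1) ^+ (i.-1 - j) * Q.[r j]].

Lemma alternating_zeros_uniq P Q r i :
  alternating_zeros P Q r i -> uniq (mkseq r i).
Proof.
case=> r_incr _ _ _ _; rewrite map_inj_in_uniq ?iota_uniq // => j1 j2.
rewrite !mem_iota !add0n => /andP[_ lt1] /andP[_ lt2] eq_r.
case: (ltngtP j1 j2) => // [lt12 | lt21].
  by have := r_incr j1 j2; rewrite lt12 lt2 eq_r ltxx => /(_ isT).
by have := r_incr j2 j1; rewrite lt21 lt1 eq_r ltxx => /(_ isT).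
Qed.

Lemma alternating_zeros_factor P Q r i : alternating_zeros P Q r i ->
  P = lead_coef P *: \prod_(x <- mkseq r i) ('X - x%:P).
Proof.
move=> zP; have [_ _ P_root [sizeP _] _] := zP.
apply: all_roots_prod_XsubC; first by rewrite size_mkseq.
  by apply/allP => x /mapP[j]; rewrite mem_iota => /andP[_ ltji] ->; apply: P_root.
by rewrite uniq_rootsE (alternating_zeros_uniq zP).
Qed.

Lemma alternating_zeros_seq P Q r i : alternating_zeros P Q r i ->
  exists s, [/\ size s = i, uniq s, all (fun x => (-1 < x) && (x < 1)) s &
                P = lead_coef P *: \prod_(x <- s) ('X - x%:P)].
Proof.
move=> zP; have [_ r_in _ _ _] := zP; exists (mkseq r i); split.
- exact: size_mkseq.
- exact: alternating_zeros_uniq zP.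
- by apply/allP => x /mapP[j]; rewrite mem_iota => /andP[_ ltji] ->; apply: r_in.
- exact: alternating_zeros_factor zP.
Qed.

Lemma horner_alternating_zeros P Q r i y : alternating_zeros P Q r i ->
  P.[y] = lead_coef P * \prod_(j < i) (y - r j).
Proof.
move=> zP; rewrite {1}(alternating_zeros_factor zP) hornerZ horner_prod big_map.
have -> : iota 0 i = index_iota 0 i by rewrite /index_iota subn0.
by rewrite big_mkord; under eq_bigr do rewrite hornerXsubC.
Qed.

Definition with_endpoints r (i m : nat) : R :=
  if m == 0%N then -1 else if (m <= i)%N then r m.-1 else 1.

Lemma with_endpoints_ltS r i :
  (forall j1 j2, (j1 < j2 < i)%N -> r j1 < r j2) ->
  (forall j, (j < i)%N -> -1 < r j < 1) ->
  forall m, (m <= i)%N -> with_endpoints r i m < with_endpoints r i m.+1.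
Proof.
move=> r_incr r_in [|m] le_mi; rewrite /with_endpoints /=.
  by case: ifP => [/r_in/andP[]//|_]; lra.
rewrite le_mi; case: ifP => [lt_mi|_]; first by apply: r_incr; rewrite ltnSn.
by have /andP[] := r_in m le_mi.
Qed.

Lemma with_endpoints_le r i :
  (forall j1 j2, (j1 < j2 < i)%N -> r j1 < r j2) ->
  (forall j, (j < i)%N -> -1 < r j < 1) ->
  forall m1 m2, (m1 <= m2 <= i.+1)%N ->
    with_endpoints r i m1 <= with_endpoints r i m2.
Proof.
move=> r_incr r_in m1 m2 /andP[le12 le2]; have le1 := leq_trans le12 le2.
apply: (homo_leq_in (D := gtn i.+2) (r := <=%R) lexx le_trans) le12; rewrite ?inE //.
- by move=> j1 j2 _; rewrite !inE => lt2 k /andP[_ /ltn_trans]; apply.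
- by move=> m _; rewrite inE ltnS => /(with_endpoints_ltS r_incr r_in)/ltW.
Qed.

Lemma alternating_zeros_step P Q N r i (g : R) :
  alternating_zeros P Q r i -> 0 < g ->
  (forall j, (j < i)%N -> N.[r j] = - g * Q.[r j]) ->
  size N = i.+2 -> 0 < lead_coef N -> 0 < N.[1] -> 0 < (-1) ^+ i.+1 * N.[-1] ->
  exists r', alternating_zeros N P r' i.+1.
Proof.
move=> zP g_gt0 NQ sizeN leadN N1 Nm1; have [r_incr r_in _ _ Q_alt] := zP.
pose t := with_endpoints r i.
have t_ltS := with_endpoints_ltS r_incr r_in.
have t_le := with_endpoints_le r_incr r_in.
have t_r j : (j < i)%N -> t j.+1 = r j by rewrite /t /with_endpoints /= => ->.
have t_end : t i.+1 = 1 by rewrite /t /with_endpoints /= ltnn.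
have N_alt m : (m <= i.+1)%N -> 0 < (-1) ^+ (i.+1 - m) * N.[t m].
  case: m => [_|m]; first by rewrite subn0.
  rewrite ltnS leq_eqVlt => /orP[/eqP-> | lt_mi].
    by rewrite subnn mul1r t_end.
  rewrite t_r // NQ //; have := Q_alt m lt_mi.
  have -> : (i.+1 - m.+1 = (i.-1 - m).+1)%N by lia.
  rewrite (_ : _ * (- g * _) = g * ((-1) ^+ (i.-1 - m) * Q.[r m])).
    exact: mulr_gt0.
  by rewrite exprS; ring.
have [r' r'_spec] :=
  roots_between_alternating_signs (t := t) (K := i.+1) t_ltS N_alt.
have r'_lt m : (m < i.+1)%N -> t m < r' m by move=> /r'_spec[/andP[]].
have r'_gt m : (m < i.+1)%N -> r' m < t m.+1 by move=> /r'_spec[/andP[]].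
exists r'; split => //.
- move=> j1 j2 /andP[lt12 lt2]; apply: (lt_le_trans (r'_gt _ (ltn_trans lt12 lt2))).
  by apply: le_trans (ltW (r'_lt _ lt2)); apply: t_le; lia.
- move=> m lt_mi; apply/andP; split.
    by apply: le_lt_trans (r'_lt _ lt_mi); apply: (t_le 0%N); lia.
  by rewrite -t_end; apply: lt_le_trans (r'_gt _ lt_mi) _; apply: t_le; lia.
- by move=> m /r'_spec[].
- move=> m lt_mi; rewrite (horner_alternating_zeros _ zP) /= mulrCA.
  have [_ _ _ [_ leadP] _] := zP; apply: mulr_gt0 => //.
  apply: prod_subr_sign => [| j lt_jm | j /andP[le_mj lt_ji]]; first by [].
  + rewrite -t_r; last exact: leq_trans lt_jm lt_mi.
    by apply: le_lt_trans (r'_lt _ lt_mi); apply: t_le; lia.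
  + rewrite -t_r //; apply: lt_le_trans (r'_gt _ lt_mi) _.
    by apply: t_le; lia.
Qed.

End AlternatingZeros.

Lemma pochS (R : realType) (x : R) m : poch x m.+1 = poch x m * (x + m%:R).
Proof. by rewrite /poch big_ord_recr. Qed.

Lemma poch_gt0 (R : realType) (x : R) m : 0 < x -> 0 < poch x m.
Proof. by move=> x_gt0; apply: prodr_gt0 => j _; have := ler0n R j; lra. Qed.

Section Gegenbauer.
Variables (R : realType) (n : nat).
Local Notation P := (gegen R n).

Lemma gegen0 : P 0 = 1. Proof. by []. Qed.

Lemma gegen1 : P 1 = 'X. Proof. by []. Qed.

Lemma gegenSS i : P i.+2 = ((i + n - 1)%:R)^-1 *:
  ((2 * i + n)%:R *: ('X * P i.+1) - (i.+1)%:R *: P i).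
Proof. by []. Qed.

Lemma horner_gegenSS i t : (P i.+2).[t] =
  ((2 * i + n)%:R * t * (P i.+1).[t] - (i.+1)%:R * (P i).[t]) / (i + n - 1)%:R.
Proof. by rewrite gegenSS hornerZ hornerD hornerN !hornerZ hornerM hornerX; ring. Qed.

Lemma gegenN i t : (P i).[- t] = (-1) ^+ i * (P i).[t].
Proof.
elim/nat_ind2: i => [||i IHi IHSi]; first by rewrite gegen0 !hornerE.
  by rewrite gegen1 !hornerX expr1 mulN1r.
by rewrite !horner_gegenSS IHi IHSi !exprS; ring.
Qed.

Lemma horner_gegen_root i t : root (P i.+1) t ->
  (P i.+2).[t] = - ((i.+1)%:R / (i + n - 1)%:R) * (P i).[t].
Proof. by move=> /eqP root_t; rewrite horner_gegenSS root_t; ring. Qed.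

Hypothesis n_gt1 : (1 < n)%N.

Lemma gegen_at1 i : (P i).[1] = 1.
Proof.
elim/nat_ind2: i => [||i IHi IHSi]; first by rewrite gegen0 !hornerE.
  by rewrite gegen1 hornerX.
rewrite horner_gegenSS IHi IHSi !mulr1 -natrB; last by lia.
by rewrite (_ : 2 * i + n - i.+1 = i + n - 1)%N ?divff ?pnatr_eq0 //; lia.
Qed.

Lemma size_gegen i : size (P i) = i.+1.
Proof.
elim/nat_ind2: i => [||i IHi IHSi]; first by rewrite gegen0 size_poly1.
  by rewrite gegen1 size_polyX.
have sizeX : size ((2 * i + n)%:R *: ('X * P i.+1)) = i.+3.
  rewrite size_scale ?pnatr_eq0; last by lia.
  by rewrite (mulrC 'X) size_mulX -?size_poly_eq0 IHSi.
rewrite gegenSS size_scale ?invr_eq0 ?pnatr_eq0; last by lia.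
rewrite size_polyDl sizeX // size_polyN.
by apply: leq_ltn_trans (size_scale_leq _ _) _; rewrite IHi.
Qed.

Lemma lead_coef_gegenSS i :
  lead_coef (P i.+2) = (2 * i + n)%:R / (i + n - 1)%:R * lead_coef (P i.+1).
Proof.
rewrite !lead_coefE !size_gegen gegenSS coefZ coefB !coefZ coefXM /=.
by rewrite [(P i)`_ _]nth_default ?size_gegen // mulr0 subr0 mulrCA mulrA.
Qed.

Lemma lead_coef_gegen_gt0 i : 0 < lead_coef (P i).
Proof.
elim/nat_ind2: i => [||i _ IH]; first by rewrite gegen0 lead_coef1.
  by rewrite gegen1 lead_coefX.
by rewrite lead_coef_gegenSS !mulr_gt0 ?invr_gt0 ?ltr0n //; lia.
Qed.

Lemma size_scale_gegen_lt (b : R) i : (size (b *: P i) < size (P i.+2))%N.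
Proof. by apply: leq_ltn_trans (size_scale_leq _ _) _; rewrite !size_gegen. Qed.

Lemma horner_gegen_perturbedN (b : R) i x :
  (P i.+2 + b *: P i).[- x] = (-1) ^+ i * (P i.+2 + b *: P i).[x].
Proof. by rewrite !hornerD !(hornerZ b) !gegenN !exprS; ring. Qed.

Lemma root_gegen_perturbedN (b : R) i x :
  root (P i.+2 + b *: P i) (- x) = root (P i.+2 + b *: P i) x.
Proof. by rewrite /root horner_gegen_perturbedN mulf_eq0 signr_eq0. Qed.

Lemma gegen_perturbed_zeros (b : R) i r :
  -1 < b -> b < (i.+1)%:R / (i + n - 1)%:R ->
  alternating_zeros (P i.+1) (P i) r i.+1 ->
  exists r', alternating_zeros (P i.+2 + b *: P i) (P i.+1) r' i.+2.
Proof.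
move=> b_gtN1 b_lt zP; have [_ _ P_root _ _] := zP.
apply: (alternating_zeros_step (g := (i.+1)%:R / (i + n - 1)%:R - b) zP).
- by rewrite subr_gt0.
- move=> j /P_root /horner_gegen_root gegen_r.
  by rewrite hornerD (hornerZ b) gegen_r; ring.
- by rewrite size_polyDl ?size_scale_gegen_lt // size_gegen.
- by rewrite lead_coefDl ?size_scale_gegen_lt // lead_coef_gegen_gt0.
- by rewrite hornerD (hornerZ b) !gegen_at1 mulr1; lra.
rewrite horner_gegen_perturbedN hornerD (hornerZ b) !gegen_at1 mulr1.
by rewrite !exprS !mulN1r opprK mulrA -expr2 sqrr_sign mul1r; lra.
Qed.

Lemma gegen_alternating_zeros i : exists r, alternating_zeros (P i.+1) (P i) r i.+1.
Proof.
elim: i => [|i [r zP]].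
  exists (fun=> 0); split => //.
  - by move=> j1 j2; lia.
  - by move=> j _; lra.
  - by move=> j _; rewrite gegen1 /root hornerX.
  - by rewrite size_gegen lead_coef_gegen_gt0.
  - by move=> j; rewrite ltnS leqn0 => /eqP->; rewrite gegen0 !hornerE.
have [|r' zP'] := gegen_perturbed_zeros (b := 0) (ltrN10 R) _ zP.
  by rewrite divr_gt0 ?ltr0n //; lia.
by exists r'; rewrite scale0r addr0 in zP'.
Qed.

End Gegenbauer.

Lemma lead_coef_gegen (R : realType) (n : nat) (n_gt2 : (2 < n)%N) i :
  lead_coef (gegen R n i) =
    poch (n%:R / 2 - 1) i * 2 ^+ i / poch (2 * (n%:R / 2 - 1)) i.
Proof.
have n_gt1 : (1 < n)%N by apply: ltnW.
have n_ge3 : (3 : R) <= n%:R by rewrite ler_nat.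
elim/nat_ind2: i => [||i _ IH].
- by rewrite gegen0 lead_coef1 /poch !big_ord0 divr1 mulr1.
- rewrite gegen1 lead_coefX !pochS /poch !big_ord0 !mul1r mulr0n !addr0 expr1; field.
  by apply: lt0r_neq0; lra.
have i_ge0 := ler0n R i.
have p_gt0 : 0 < poch (2 * (n%:R / 2 - 1) : R) i.+1 by apply: poch_gt0; lra.
rewrite lead_coef_gegenSS // IH !(pochS _ i.+1) !exprS natrB; last by lia.
rewrite (natrD _ (2 * i)) natrM natrD -natr1; field.
by apply/andP; split; apply: lt0r_neq0 => //; lra.
Qed.

Theorem lemma4p11 (R : realType) (n k : nat) (b c : R) :
  (3 <= n)%N -> (1 <= k)%N ->
  let alpha : R := n%:R / 2 - 1 in
  0 < b -> c < 0 ->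
  b * c = - ((k.+1)%:R * k%:R * (alpha + k%:R - 1)
             / ((2 * alpha + k%:R) * (2 * alpha + k%:R - 1) * (alpha + k%:R + 1))) ->
  b + c = - (2 * alpha * (k.+1)%:R ^+ 2 * (alpha + k%:R - 1)
             / ((2 * alpha + k%:R) * (2 * alpha + k%:R - 1) * (alpha + (2 * k)%:R + 1))) ->
  exists s : seq R,
    [/\ size s = k.+1, uniq s,
        all (fun x => (-1 < x) && (x < 1)) s,
        all (fun x => - x \in s) s &
        gegen R n k.+1 + b *: gegen R n k.-1 =
          (poch alpha k.+1 * 2 ^+ k.+1 / poch (2 * alpha) k.+1) *:
            \prod_(x <- s) ('X - x%:P)].
Proof.
move=> n_ge3 k_ge1 alpha b_gt0 c_lt0 bc_eq bpc_eq.
have n_gt1 : (1 < n)%N by apply: ltnW.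
have n_ge3R : (3 : R) <= n%:R by rewrite ler_nat.
have alpha_ge : 1/2 <= alpha by rewrite /alpha; lra.
have b_lt : b < k%:R / (2 * alpha + k%:R).
  apply: (vieta_root_lt alpha_ge _ c_lt0); first by rewrite ler1n.
    by rewrite bc_eq -(natr1 k).
  by rewrite bpc_eq -(natr1 k) natrM.
case: k k_ge1 b_lt {bc_eq bpc_eq} => [//|k] _ b_lt /=.
have [r zP] := gegen_alternating_zeros R n_gt1 k.
have [||r' zq] := gegen_perturbed_zeros n_gt1 (b := b) _ _ zP; first lra.
  have -> : ((k + n - 1)%:R : R) = 2 * alpha + k.+1%:R.
    by rewrite natrB ?natrD -?natr1 /alpha; [field | lia].
  exact: b_lt.
have [s [size_s uniq_s s_in q_eq]] := alternating_zeros_seq zq.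
have [_ _ _ [_ lead_q] _] := zq.
exists s; split => //.
  apply: (roots_closed_oppr q_eq) => [|x]; last exact: root_gegen_perturbedN.
  by rewrite -lead_coef_eq0 lt0r_neq0.
by rewrite {1}q_eq lead_coefDl ?size_scale_gegen_lt // lead_coef_gegen.
Qed.
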